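(* Let $X \ge 1$. Let $P \subseteq \{1,\dots,X\}$ be an arithmetic progression of length $\ge X^{3/4}$. Let $\mathcal{Q}$ be a set of pairwise coprime positive integers with $\prod_{q \in \mathcal{Q}} q \ge X^{5/4}$, and suppose the common difference of $P$ is coprime to every $q \in \mathcal{Q}$. Let $S \subseteq \mathcal{Q}$ satisfy $(\max_{q \in \mathcal{Q}} q)^{|S|} \le X^{1/4}$, and let $T \subseteq S$. Let $a \in G_S$. Put $\mathcal{Q}' := \mathcal{Q} \setminus S$ and $P' := \{ x \in P : x \equiv a \pmod{\prod_{q \in S \setminus T} q}\}$ (where $a$ is reduced to a residue class modulo $\prod_{q\in S\setminus T}q$ via the Chinese remainder theorem). Then the lift $\Psi_{P',\mathcal{Q}'}$ is well-defined, and there is a real number $\eta$ with $|\eta| \le X^{-1/2}$ such that for every $f \in B(P)$, \[ \sigma_{S\to a}\, E_T\, \Psi_{P,\mathcal{Q}} f = (1+\eta)\, \Psi_{P',\mathcal{Q}'}\big(f|_{P'}\big). \]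
   Context: For a finite set $\Sigma$, $B(\Sigma)$ denotes the space of functions $\Sigma\to\mathbb{C}$. For a set $\mathcal{R}$ of pairwise coprime positive integers, $G_{\mathcal{R}} := \prod_{q\in\mathcal{R}} \mathbb{Z}/q\mathbb{Z}\cong \mathbb{Z}/(\prod_{q\in\mathcal{R}}q)\mathbb{Z}$ (Chinese remainder theorem), and $\pi_{\mathcal{R}}:\mathbb{Z}\to G_{\mathcal{R}}$ is the natural projection. Characters of $G_{\mathcal{Q}}$ are identified with $\xi=\sum_{q\in\mathcal{Q}}\xi_q/q \in \bigoplus_{q\in\mathcal{Q}}(\frac1q\mathbb{Z}/\mathbb{Z})$, acting as $x\mapsto e(\xi x)$, $e(t)=e^{2\pi i t}$; Fourier coefficients are $\widehat{g}(\xi)=\mathbb{E}_{x\in G_{\mathcal{Q}}}g(x)\overline{e(\xi x)}$ so that $g=\sum_\xi \widehat g(\xi)e(\xi\cdot)$. For $T\subseteq\mathcal{Q}$, the averaging operator $E_T$ on $B(G_{\mathcal{Q}})$ is the Fourier multiplier $E_T e(\xi\cdot)=w(\xi)e(\xi\cdot)$ with $w(\xi)=1$ if $\xi_q=0$ for all $q\in T$ and $w(\xi)=0$ otherwise. For $S\subseteq\mathcal{Q}$ and $a\in G_S$, identify $G_{\mathcal{Q}}=G_S\times G_{\mathcal{Q}\setminus S}$ and define the specialisation $\sigma_{S\to a}:B(G_{\mathcal{Q}})\to B(G_{\mathcal{Q}\setminus S})$ by $(\sigma_{S\to a}g)(y)=g(a,y)$. Lifting: if $\mathcal{R}$ is a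 set of pairwise coprime positive integers with $\prod_{q\in\mathcal{R}}q\ge X$ and $P\subseteq\{1,\dots,X\}$ is an arithmetic progression whose common difference is coprime to all $q\in\mathcal{R}$, then $\Psi_{P,\mathcal{R}}:B(P)\to B(G_{\mathcal{R}})$ is defined by $(\Psi_{P,\mathcal{R}}f)(\pi_{\mathcal{R}}(x)) = |P|^{-1}|G_{\mathcal{R}}|f(x)$ for $x\in P$, and $\Psi_{P,\mathcal{R}}f=0$ off $\pi_{\mathcal{R}}(P)$ (this is well-defined since $\pi_{\mathcal{R}}$ is injective on $P$). *)

From mathcomp Require Import all_boot all_order all_algebra.
From mathcomp Require Import all_classical all_reals all_analysis.
From mathcomp Require Import complex.
Import GRing.Theory Num.Theory.
Set Implicit Arguments. Unset Strict Implicit. Unset Printing Implicit Defensive.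
Local Open Scope ring_scope.
Local Open Scope complex_scope.

(* An element of G_Rs = prod_{q in Rs} Z/qZ is encoded as a function
   x : nat -> nat giving the residue x q in [0,q) for each modulus q in Rs
   (and 0 for moduli outside Rs).  Such an x is "in G_Rs". *)
Definition inG (Rs : seq nat) (x : nat -> nat) : Prop :=
  (forall q, q \in Rs -> (x q < q)%N) /\ (forall q, q \notin Rs -> x q = 0%N).

Definition upd (x : nat -> nat) (q r : nat) : nat -> nat :=
  fun n => if n == q then r else x n.

(* Enumeration of G_Rs (each element exactly once when Rs is duplicate-free). *)
Definition Genum (Rs : seq nat) : seq (nat -> nat) :=
  foldr (fun q acc => [seq upd x q r | x <- acc, r <- iota 0 q]) [:: fun _ => 0%N] Rs.

Definition cardG (Rs : seq nat) : nat := \prod_(q <- Rs) q.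





Section Analysis.
Variable R : realType.

Definition ee (t : R) : R[i] := (cos (2 * pi * t)) +i* (sin (2 * pi * t)).

(* xi . x for the character xi = sum_q xi_q / q *)
Definition pairing (Rs : seq nat) (xi x : nat -> nat) : R :=
  \sum_(q <- Rs) ((xi q * x q)%:R / q%:R).

Definition fhat (Rs : seq nat) (g : (nat -> nat) -> R[i]) (xi : nat -> nat) : R[i] :=
  ((cardG Rs)%:R)^-1 * \sum_(x <- Genum Rs) g x * (ee (pairing Rs xi x))^*.

Definition ET (Q T : seq nat) (g : (nat -> nat) -> R[i]) : (nat -> nat) -> R[i] :=
  fun x => \sum_(xi <- Genum Q | all (fun q => xi q == 0%N) T)
              fhat Q g xi * ee (pairing Q xi x).

(* Specialisation sigma_{S -> a} : B(G_Q) -> B(G_{Q \ S}),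
   (sigma g)(y) = g(a, y) under G_Q = G_S x G_{Q\S}. *)
Definition spec (S : seq nat) (a : nat -> nat) (g : (nat -> nat) -> R[i])
  : (nat -> nat) -> R[i] :=
  fun y => g (fun q => if q \in S then a q else y q).

Definition APseq (b d L : nat) : seq nat := [seq (b + d * k)%N | k <- iota 0 L].

Definition in_range (X : R) (P : seq nat) : Prop :=
  forall x, x \in P -> (1 <= x)%N /\ x%:R <= X.

(* The hypotheses under which the lift Psi_{P,Rs} is well-defined:
   P is an arithmetic progression in {1..X} whose common difference
   is coprime to every q in Rs, and prod_{q in Rs} q >= X. *)
Definition lift_ok (X : R) (P : seq nat) (Rs : seq nat) : Prop :=
  (exists b d L : nat, P = APseq b d L /\ (0 < d)%N /\
     forall q, q \in Rs -> coprime d q) /\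
  in_range X P /\ X <= (cardG Rs)%:R.

(* The lift Psi_{P,Rs} f: equals |P|^{-1}|G_Rs| f(x) at pi_Rs(x) for x in P,
   and 0 off pi_Rs(P).  (pi_Rs is injective on P when lift_ok holds, so the
   sum below has at most one nonzero term.) *)
Definition Psi (P : seq nat) (Rs : seq nat) (f : nat -> R[i]) : (nat -> nat) -> R[i] :=
  fun y => ((cardG Rs)%:R / (size P)%:R) *
           \sum_(x <- P | all (fun q => y q == (x %% q)%N) Rs) f x.

End Analysis.

(* At a point x of G_Q, E_T Psi_{P,Q} f only sees the coordinates outside T:
   orthogonality of the additive characters of each Z/qZ gives
   E_T Psi_{P,Q} f (x) = |G_{Q\T}| / |P| * sum of f(p) over the p in P with
   p = x_q mod q for every q outside T.  Specialising the S-coordinates to a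
   keeps the p in P' that reduce to y on Q'.  As the difference d of P is coprime
   to M = prod_{q in S\T} q, the congruence p = a mod M cuts out one residue class
   of the index of P, so P' is a progression of difference dM with N terms,
   |MN - |P|| <= M.  Hence the two normalisations differ by the factor
   MN/|P| = 1 + eta, with |eta| <= M/|P| <= X^{1/4} / X^{3/4}. *)

From mathcomp Require Import all_boot all_order all_algebra.
From mathcomp Require Import all_classical all_reals all_analysis.
From mathcomp Require Import complex.
From mathcomp Require Import ring lra zify.
Import Order.TTheory GRing.Theory Num.Theory.
Local Open Scope ring_scope.
Local Open Scope complex_scope.

Set Implicit Arguments. Unset Strict Implicit. Unset Printing Implicit Defensive.

Section CoprimeModuli.
Local Open Scope nat_scope.

Definition pairwise_coprime (l : seq nat) : Prop :=
  forall q q', q \in l -> q' \in l -> q != q' -> coprime q q'.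

Lemma pairwise_coprime_sub (l l' : seq nat) :
  {subset l' <= l} -> pairwise_coprime l -> pairwise_coprime l'.
Proof. by move=> sub hl q q' /sub hq /sub hq'; apply: hl. Qed.

Lemma coprime_prodr_seq (p : nat) (l : seq nat) :
  (forall q, q \in l -> coprime p q) -> coprime p (\prod_(q <- l) q).
Proof.
elim: l => [|q l IH] cop; first by rewrite big_nil coprimen1.
rewrite big_cons coprimeMr cop ?mem_head //= IH // => q' hq'.
by apply: cop; rewrite inE hq' orbT.
Qed.

Lemma coprime_prod_notin (Q l : seq nat) (q : nat) : pairwise_coprime Q ->
  {subset l <= Q} -> q \in Q -> q \notin l -> coprime q (\prod_(q' <- l) q').
Proof.
move=> cop lQ qQ ql; apply: coprime_prodr_seq => q' q'l.
apply: cop => //; first exact: lQ.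
by apply: contraNneq ql => ->.
Qed.

Lemma coprime_head_prod (q : nat) (l : seq nat) :
  uniq (q :: l) -> pairwise_coprime (q :: l) -> coprime q (\prod_(q' <- l) q').
Proof.
case/andP=> ql _ cop; apply: coprime_prod_notin cop _ (mem_head _ _) ql.
by move=> q' q'l; rewrite inE q'l orbT.
Qed.

Lemma eqn_mod_prod (l : seq nat) (m n : nat) : uniq l -> pairwise_coprime l ->
  all (fun q => m == n %[mod q]) l = (m == n %[mod \prod_(q <- l) q]).
Proof.
elim: l => [|q l IH] ul cop; first by rewrite big_nil !modn1.
have copl : pairwise_coprime l by apply: pairwise_coprime_sub cop => q' hq'; rewrite inE hq' orbT.
rewrite big_cons chinese_remainder ?coprime_head_prod //= IH //.
by case/andP: ul.
Qed.

Lemma chinese_seq (l : seq nat) (r : nat -> nat) : uniq l -> pairwise_coprime l ->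
  exists c, forall q, q \in l -> c = r q %[mod q].
Proof.
elim: l => [|q l IH] ul cop; first by exists 0.
have copl : pairwise_coprime l by apply: pairwise_coprime_sub cop => q' hq'; rewrite inE hq' orbT.
have [c hc] := IH (proj2 (andP ul)) copl.
have cop_q := coprime_head_prod ul cop.
exists (chinese q (\prod_(q' <- l) q') (r q) c) => q'; rewrite inE => /predU1P [->|hq'].
  exact: chinese_modl.
have dvd_q' : q' %| \prod_(q'' <- l) q'' by rewrite (big_rem q' hq') dvdn_mulr.
by rewrite -(hc q' hq') -(modn_dvdm _ dvd_q') chinese_modr // (modn_dvdm _ dvd_q').
Qed.

Lemma eqn_modMl_coprime (d M k k' : nat) : coprime d M ->
  (d * k == d * k' %[mod M]) = (k == k' %[mod M]).
Proof.
move=> cop; wlog le_k'k : k k' / k' <= k.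
  by move=> W; case: (leqP k' k) => [|/ltnW] hk; [|rewrite eq_sym [X in _ = X]eq_sym]; apply: W.
by rewrite !eqn_mod_dvd ?leq_mul2l ?le_k'k ?orbT // -mulnBr Gauss_dvdr // coprime_sym.
Qed.

(* The Bezout relation [km * d = kn * M + 1] makes [km] an inverse of [d] mod [M]. *)
Lemma coprime_modn_mul_solvable (d M r : nat) : 0 < d -> coprime d M ->
  exists k, d * k = r %[mod M].
Proof.
move=> d_gt0 cop; case: (egcdnP M d_gt0) => km kn def_km _.
exists (km * r); rewrite mulnA [d * km]mulnC def_km (eqnP cop).
by rewrite mulnDl mul1n mulnAC modnMDl.
Qed.

Lemma AP_index_residue (b d M c : nat) : 0 < d -> 0 < M -> coprime d M ->
  exists2 k0, k0 < M & forall k, (b + d * k == c %[mod M]) = (k %% M == k0).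
Proof.
move=> d_gt0 M_gt0 cop.
have [k1 hk1] := coprime_modn_mul_solvable (c + (M - 1) * b) d_gt0 cop.
have sol : b + d * k1 = c %[mod M].
  rewrite -modnDmr hk1 modnDmr addnCA -mulSn subn1 prednK //.
  by rewrite addnC mulnC modnMDl.
exists (k1 %% M); first by rewrite ltn_pmod.
by move=> k; rewrite -sol eqn_modDl eqn_modMl_coprime.
Qed.

Lemma all_residues_mod_prod (l : seq nat) (r : nat -> nat) :
  uniq l -> pairwise_coprime l -> (forall q, q \in l -> r q < q) ->
  exists c, forall x, all (fun q => x %% q == r q) l = (x == c %[mod \prod_(q <- l) q]).
Proof.
move=> ul cop r_lt; have [c hc] := chinese_seq r ul cop.
exists c => x; rewrite -eqn_mod_prod //; apply: eq_in_all => q hq.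
by rewrite (hc q hq) (modn_small (r_lt q hq)).
Qed.

End CoprimeModuli.

Section ResidueClassesOfAP.
Local Open Scope nat_scope.

Lemma filter_iota_mod (M k0 L : nat) : 0 < M -> k0 < M ->
  [seq k <- iota 0 L | k %% M == k0] =
  [seq k0 + M * j | j <- iota 0 ((L + (M - 1 - k0)) %/ M)].
Proof.
move=> M_gt0 k0_lt; set D := M - 1 - k0.
elim: L => [|L IH]; first by rewrite /= divn_small //; lia.
rewrite -addn1 iotaD filter_cat IH /= add0n (_ : L + 1 + D = (L + D).+1); last by lia.
rewrite divnS //.
have -> : (M %| (L + D).+1) = (L %% M == k0).
  rewrite (_ : (L + D).+1 = L + (M - k0)); last by lia.
  rewrite /dvdn -[X in _ == X](modnn M) -{3}(subnKC (ltnW k0_lt)).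
  by rewrite eqn_modDr (modn_small k0_lt).
case: eqP => hL; last by rewrite add0n cats0.
rewrite add1n -addn1 iotaD map_cat /= add0n; congr (_ ++ [:: _]).
have eL := divn_eq L M; rewrite hL in eL.
rewrite (_ : L + D = L %/ M * M + (M - 1)); last by rewrite /D; lia.
rewrite divnMDl // (@divn_small (M - 1)) ?addn0; last by lia.
by rewrite mulnC addnC -eL.
Qed.

Lemma residue_count_bounds (M k0 L : nat) : 0 < M ->
  M * ((L + (M - 1 - k0)) %/ M) <= L + M /\ L <= M * ((L + (M - 1 - k0)) %/ M) + M.
Proof.
move=> M_gt0; have := divn_eq (L + (M - 1 - k0)) M.
have := ltn_pmod (L + (M - 1 - k0)) M_gt0.
set N := _ %/ M; set r := _ %% M; split; nia.
Qed.

Lemma filter_APseq_mod (b d L M c : nat) : 0 < d -> 0 < M -> coprime d M ->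
  exists b' N, [seq x <- APseq b d L | x == c %[mod M]] = APseq b' (d * M) N /\
               M * N <= L + M /\ L <= M * N + M.
Proof.
move=> d_gt0 M_gt0 cop; have [k0 k0_lt hk0] := AP_index_residue b c d_gt0 M_gt0 cop.
exists (b + d * k0), ((L + (M - 1 - k0)) %/ M); split; last exact: residue_count_bounds.
rewrite /APseq filter_map (eq_filter (a2 := fun k => k %% M == k0)); last exact: hk0.
rewrite filter_iota_mod // -map_comp; apply: eq_map => j /=.
by rewrite mulnDr mulnA addnA.
Qed.

Lemma filter_APseq_residues (b d L : nat) (l : seq nat) (r : nat -> nat) :
  0 < d -> uniq l -> pairwise_coprime l -> (forall q, q \in l -> coprime d q) ->
  (forall q, q \in l -> r q < q) ->
  let M := \prod_(q <- l) q in
  exists b' N, [seq x <- APseq b d L | all (fun q => x %% q == r q) l] = APseq b' (d * M) N /\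
               M * N <= L + M /\ L <= M * N + M.
Proof.
move=> d_gt0 ul cop copd r_lt M.
have M_gt0 : 0 < M by rewrite /M big_seq prodn_cond_gt0 // => q /r_lt /(leq_ltn_trans (leq0n _)).
have [c res_c] := all_residues_mod_prod ul cop r_lt.
by rewrite (eq_filter res_c); apply: filter_APseq_mod => //; apply: coprime_prodr_seq.
Qed.

End ResidueClassesOfAP.

Section Products.
Local Open Scope nat_scope.

Lemma prod_subset_split (Q S : seq nat) (Pr : pred nat) :
  uniq Q -> uniq S -> {subset S <= Q} ->
  \prod_(q <- Q | Pr q) q = \prod_(q <- S | Pr q) q * \prod_(q <- Q | Pr q && (q \notin S)) q.
Proof.
move=> uQ uS SQ; rewrite (bigID (fun q => q \in S)) /=; congr (_ * _).
rewrite -big_filter -[RHS]big_filter; apply/perm_big/uniq_perm; rewrite ?filter_uniq //.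
move=> q; rewrite !mem_filter -andbA.
by case: (boolP (q \in S)) => [/SQ -> | _]; rewrite ?andbF.
Qed.

Lemma prod_leq_expn (l : seq nat) (m : nat) :
  (forall q, q \in l -> q <= m) -> \prod_(q <- l) q <= m ^ size l.
Proof.
elim: l => [|q l IH] le_m; first by rewrite big_nil.
rewrite big_cons expnS leq_mul ?le_m ?mem_head // IH // => q' hq'.
by rewrite le_m // inE hq' orbT.
Qed.

Lemma prod_filter_leq (l : seq nat) (Pr : pred nat) : (forall q, q \in l -> 0 < q) ->
  \prod_(q <- l | Pr q) q <= \prod_(q <- l) q.
Proof.
move=> l_gt0; rewrite [X in _ <= X](bigID Pr) /= leq_pmulr //.
by rewrite big_seq_cond prodn_cond_gt0 // => q /andP [/l_gt0].
Qed.

Lemma prod_notin_split (Q S T : seq nat) :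
  uniq Q -> uniq S -> {subset S <= Q} -> {subset T <= S} ->
  \prod_(q <- Q | q \notin T) q =
  \prod_(q <- [seq q <- S | q \notin T]) q * \prod_(q <- [seq q <- Q | q \notin S]) q.
Proof.
move=> uQ uS SQ TS; rewrite (prod_subset_split _ uQ uS SQ) !big_filter.
congr (_ * _); apply: eq_bigl => q; apply/andb_idl => /negP qS.
by apply/negP => /TS.
Qed.

End Products.

Lemma all_spec_residues (Q S T : seq nat) (a y : nat -> nat) (p : nat) :
  {subset T <= S} -> {subset S <= Q} ->
  all (fun q => (q \in T) || ((if q \in S then a q else y q) == p %% q)%N) Q
  = all (fun q => p %% q == a q)%N [seq q <- S | q \notin T] &&
    all (fun q => y q == p %% q)%N [seq q <- Q | q \notin S].
Proof.
move=> TS SQ; rewrite !all_filter; apply/allP/andP => [spec_p | [/allP resS /allP resQ] q qQ].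
  split; apply/allP => q qS; apply/implyP => qT.
    by have := spec_p q (SQ q qS); rewrite (negbTE qT) qS eq_sym.
  by have := spec_p q qS; rewrite (contraNF (@TS q) qT) (negbTE qT).
case: (boolP (q \in T)) => //= qT; case: ifP => qS.
  by have /implyP := resS q qS; rewrite eq_sym; apply.
by have /implyP := resQ q qQ; rewrite qS; apply.
Qed.

Section Characters.
Variable R : realType.
Implicit Types s t : R.

Lemma eeD s t : ee (s + t) = ee s * ee t.
Proof.
rewrite /ee mulrDr cosD sinD [RHS]/GRing.mul /=.
by congr (_ +i* _); ring.
Qed.

Lemma ee0 : ee (0 : R) = 1.
Proof. by rewrite /ee mulr0 cos0 sin0. Qed.

Lemma eeN t : ee (- t) = (ee t)^*%R.
Proof. by rewrite /ee mulrN cosN sinN. Qed.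

Lemma eeMn (n : nat) t : ee (n%:R * t) = ee t ^+ n.
Proof.
elim: n => [|n IH]; first by rewrite mul0r ee0 expr0.
by rewrite -addn1 natrD mulrDl mul1r eeD IH exprD expr1.
Qed.

Lemma ee_nat (n : nat) : ee (n%:R : R) = 1.
Proof.
have ee1 : ee (1 : R) = 1 by rewrite /ee mulr1 mulr_natl cos2pi sin2pi.
by rewrite -(mulr1 n%:R) eeMn ee1 expr1n.
Qed.

Lemma ee_sum (I : Type) (l : seq I) (F : I -> R) :
  ee (\sum_(i <- l) F i) = \prod_(i <- l) ee (F i).
Proof.
elim: l => [|i l IH]; first by rewrite !big_nil ee0.
by rewrite !big_cons eeD IH.
Qed.

(* [cos (2 pi t) = 1 - 2 sin (pi t)^2], and [sin (pi t) > 0] on [0 < t < 1]. *)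
Lemma ee_neq1_pos t : 0 < t < 1 -> ee t != 1.
Proof.
case/andP=> t_gt0 t_lt1; apply/eqP => -[cos1 _].
have sin_gt0 : 0 < sin (pi * t).
  by apply: sin_gt0_pi; rewrite mulr_gt0 ?pi_gt0 //= -[X in _ < X]mulr1 ltr_pM2l ?pi_gt0.
move: cos1; rewrite (_ : 2 * pi * t = pi * t + pi * t); last by ring.
rewrite cosD -!expr2 cos2sin2 => /eqP; rewrite -subr_eq0.
by rewrite (_ : _ - 1 = - (2 * sin (pi * t) ^+ 2)); [rewrite oppr_eq0 mulf_eq0 sqrf_eq0 !gt_eqF | ring].
Qed.

Lemma ee_neq1 t : t != 0 -> -1 < t < 1 -> ee t != 1.
Proof.
move=> t_neq0 /andP [t_gtN1 t_lt1]; case: (ltrgtP t 0) => t0; last by rewrite t0 eqxx in t_neq0.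
  have : ee (- t) != 1 by apply: ee_neq1_pos; rewrite oppr_gt0 t0 ltrNl.
  by apply: contraNneq; rewrite eeN => ->; rewrite conjC1.
by apply: ee_neq1_pos; rewrite t0.
Qed.

Lemma sum_ee_orthogonality (q u v : nat) : (0 < q)%N -> (u < q)%N -> (v < q)%N ->
  \sum_(r <- iota 0 q) ee ((r * u)%:R / q%:R : R) * ee (- ((r * v)%:R / q%:R))
  = (u == v)%:R * q%:R.
Proof.
move=> q_gt0 u_lt v_lt; have qR_gt0 : (0 : R) < q%:R by rewrite ltr0n.
set z := ee ((u%:R - v%:R) / q%:R : R).
have ez r : ee ((r * u)%:R / q%:R : R) * ee (- ((r * v)%:R / q%:R)) = z ^+ r.
  by rewrite -eeD -eeMn /z !natrM; congr ee; ring.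
under eq_bigr => r _ do rewrite ez.
rewrite -(subn0 q) -/(index_iota 0 q) big_mkord subn0.
have [u_eq_v|u_neq_v] := eqVneq u v.
  rewrite /z u_eq_v subrr mul0r ee0 mul1r.
  by under eq_bigr => i _ do rewrite expr1n; rewrite sumr_const card_ord.
have zq : z ^+ q = 1.
  rewrite /z -eeMn mulrC mulfVK ?pnatr_eq0 -?lt0n //.
  by rewrite eeD eeN !ee_nat conjC1 mulr1.
have z_neq1 : z != 1.
  apply: ee_neq1; first by rewrite mulf_neq0 ?invr_eq0 ?pnatr_eq0 -?lt0n // subr_eq0 eqr_nat.
  have uR : (u%:R : R) < q%:R by rewrite ltr_nat.
  have vR : (v%:R : R) < q%:R by rewrite ltr_nat.
  have [u0 v0] : (0 : R) <= u%:R /\ (0 : R) <= v%:R by rewrite !ler0n.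
  rewrite ltr_pdivrMr // ltr_pdivlMr //; apply/andP; split; lra.
have /esym/eqP := subrX1 z q; rewrite zq subrr mulf_eq0 subr_eq0 (negbTE z_neq1) /=.
by move=> /eqP ->; rewrite mul0r.
Qed.

End Characters.

Lemma prod_nat_all (K : pzSemiRingType) (I : Type) (l : seq I) (B : pred I) :
  \prod_(i <- l) ((B i)%:R : K) = (all B l)%:R.
Proof.
elim: l => [|i l IH]; first by rewrite big_nil.
by rewrite big_cons IH -natrM mulnb.
Qed.

Section FourierOnGQ.
Variable R : realType.
Implicit Types (Q T : seq nat) (x y xi : nat -> nat).

Lemma ee_pairing Q xi y :
  ee (pairing R Q xi y) = \prod_(q <- Q) ee ((xi q * y q)%:R / q%:R).
Proof. by rewrite /pairing ee_sum. Qed.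

Lemma conj_ee_pairing Q xi y :
  (ee (pairing R Q xi y))^*%R = \prod_(q <- Q) ee (- ((xi q * y q)%:R / q%:R)).
Proof. by rewrite -eeN /pairing -sumrN ee_sum. Qed.

Lemma sum_Genum_prod Q (h : nat -> nat -> R[i]) : uniq Q ->
  \sum_(x <- Genum Q) \prod_(q <- Q) h q (x q) = \prod_(q <- Q) \sum_(r <- iota 0 q) h q r.
Proof.
elim: Q => [|q Q IH] uQ; first by rewrite /= big_cons !big_nil addr0.
case/andP: uQ => qQ uQ.
rewrite [Genum _]/= big_allpairs_dep big_cons -IH // mulr_sumr; apply: eq_bigr => x _.
rewrite mulr_suml; apply: eq_bigr => r _.
rewrite big_cons /upd eqxx; congr (_ * _); apply: eq_big_seq => q' hq'.
by case: eqP hq' => // ->; rewrite (negbTE qQ).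
Qed.

Lemma sum_iota_delta (q i : nat) (F : nat -> R[i]) : (i < q)%N ->
  \sum_(r <- iota 0 q) (r == i)%:R * F r = F i.
Proof.
move=> i_lt; rewrite (bigD1_seq i) ?mem_iota ?iota_uniq //= eqxx mul1r big1 ?addr0 //.
by move=> r /negbTE ->; rewrite mul0r.
Qed.

Lemma sum_Genum_delta Q z (F : nat -> nat -> R[i]) :
  uniq Q -> (forall q, q \in Q -> (z q < q)%N) ->
  \sum_(y <- Genum Q) (all (fun q => y q == z q) Q)%:R * \prod_(q <- Q) F q (y q)
  = \prod_(q <- Q) F q (z q).
Proof.
move=> uQ z_lt.
rewrite (eq_bigr (fun y => \prod_(q <- Q) ((y q == z q)%:R * F q (y q)))) => [|y _].
  rewrite (sum_Genum_prod (fun q r => (r == z q)%:R * F q r)) //; apply: eq_big_seq => q hq.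
  exact: sum_iota_delta (z_lt q hq).
by rewrite big_split prod_nat_all.
Qed.

Lemma fhat_Psi Q P (f : nat -> R[i]) xi :
  uniq Q -> (forall q, q \in Q -> (0 < q)%N) ->
  fhat Q (Psi P Q f) xi =
    (size P)%:R^-1 * \sum_(p <- P) f p * (ee (pairing R Q xi (fun q => p %% q)%N))^*%R.
Proof.
move=> uQ Q_gt0.
have G_neq0 : (cardG Q)%:R != 0 :> R[i].
  by rewrite pnatr_eq0 -lt0n /cardG big_seq prodn_cond_gt0.
rewrite /fhat /Psi; under eq_bigr => y _ do rewrite -!mulrA.
rewrite -mulr_sumr !mulrA mulVf // mul1r -mulr_sumr; congr (_ * _).
under eq_bigr => y _ do rewrite big_mkcond mulr_suml.
rewrite exchange_big /=; apply: eq_bigr => p _; rewrite conj_ee_pairing.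
rewrite -(@sum_Genum_delta Q (fun q => p %% q)%N (fun q r => ee (- ((xi q * r)%:R / q%:R))))
  // => [|q hq]; last by rewrite ltn_pmod ?Q_gt0.
rewrite mulr_sumr; apply: eq_bigr => y _; rewrite conj_ee_pairing.
by case: (all _ _); rewrite ?mul1r ?mul0r ?mulr0.
Qed.

Lemma sum_ee_coord (q x p : nat) (inT : bool) : (0 < q)%N -> (x < q)%N -> (p < q)%N ->
  \sum_(r <- iota 0 q) (~~ inT || (r == 0)%N)%:R *
     (ee ((r * x)%:R / q%:R : R) * ee (- ((r * p)%:R / q%:R)))
  = if inT then 1 else (x == p)%:R * q%:R.
Proof.
move=> q_gt0 x_lt p_lt; case: inT => /=.
  by rewrite sum_iota_delta // !mul0n mul0r oppr0 ee0 mulr1.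
by under eq_bigr => r _ do rewrite mul1r; rewrite sum_ee_orthogonality.
Qed.

Lemma prod_if_mem (l T : seq nat) (B : pred nat) :
  \prod_(q <- l) (if q \in T then 1 else (B q)%:R * q%:R)
  = (\prod_(q <- l | q \notin T) q)%:R * (all (fun q => (q \in T) || B q) l)%:R :> R[i].
Proof.
elim: l => [|q l IH]; first by rewrite !big_nil mulr1.
rewrite !big_cons IH /=; case: (q \in T); rewrite /= ?mul1r // natrM.
by case: (B q); rewrite /= ?mul1r ?mulrA // !mul0r mulr0.
Qed.

Lemma sum_Genum_chars Q T x p :
  uniq Q -> (forall q, q \in Q -> (0 < q)%N) -> {subset T <= Q} ->
  (forall q, q \in Q -> (x q < q)%N) ->
  \sum_(xi <- Genum Q | all (fun q => xi q == 0%N) T)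
     ee (pairing R Q xi x) * (ee (pairing R Q xi (fun q => p %% q)%N))^*%R
  = (\prod_(q <- Q | q \notin T) q)%:R *
    (all (fun q => (q \in T) || (x q == p %% q)%N) Q)%:R.
Proof.
move=> uQ Q_gt0 TQ x_lt.
pose h q r := (~~ (q \in T) || (r == 0)%N)%:R *
  (ee ((r * x q)%:R / q%:R : R) * ee (- ((r * (p %% q))%:R / q%:R))).
have restrict xi : all (fun q => xi q == 0%N) T = all (fun q => ~~ (q \in T) || (xi q == 0%N)) Q.
  apply/allP/allP => [xiT q _ | xiQ q qT].
    by case: (boolP (q \in T)) => // qT; rewrite (xiT q qT) orbT.
  by have := xiQ q (TQ q qT); rewrite qT.
rewrite big_mkcond (eq_bigr (fun xi => \prod_(q <- Q) h q (xi q))) => [|xi _]; last first.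
  rewrite !big_split /= prod_nat_all ee_pairing conj_ee_pairing restrict.
  by case: (all _ _); rewrite ?mul1r ?mul0r.
rewrite sum_Genum_prod // -prod_if_mem; apply: eq_big_seq => q hq.
by rewrite sum_ee_coord ?ltn_pmod ?x_lt ?Q_gt0.
Qed.

Lemma ET_Psi Q T P (f : nat -> R[i]) x :
  uniq Q -> (forall q, q \in Q -> (0 < q)%N) -> {subset T <= Q} ->
  (forall q, q \in Q -> (x q < q)%N) ->
  ET Q T (Psi P Q f) x = (\prod_(q <- Q | q \notin T) q)%:R / (size P)%:R *
    \sum_(p <- P | all (fun q => (q \in T) || (x q == p %% q)%N) Q) f p.
Proof.
move=> uQ Q_gt0 TQ x_lt; rewrite /ET.
transitivity ((size P)%:R^-1 * \sum_(p <- P)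
  \sum_(xi <- Genum Q | all (fun q => xi q == 0%N) T)
    f p * (ee (pairing R Q xi x) * (ee (pairing R Q xi (fun q => p %% q)%N))^*%R)).
  rewrite exchange_big /= mulr_sumr; apply: eq_bigr => xi _.
  rewrite fhat_Psi // -mulrA mulr_suml; congr (_ * _); apply: eq_bigr => p _.
  by rewrite mulrAC -mulrA.
rewrite (eq_bigr (fun p => f p * ((\prod_(q <- Q | q \notin T) q)%:R *
  (all (fun q => (q \in T) || (x q == p %% q)%N) Q)%:R))) => [|p _]; last first.
  by rewrite -mulr_sumr sum_Genum_chars.
rewrite [_ / _]mulrC -mulrA; congr (_ * _).
rewrite mulr_sumr [RHS]big_mkcond; apply: eq_bigr => p _.
by case: (all _ _); rewrite ?mulr1 ?mulr0 // mulrC.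
Qed.

Lemma spec_ET_Psi Q S T P (f : nat -> R[i]) (a y : nat -> nat) :
  uniq Q -> (forall q, q \in Q -> (0 < q)%N) -> {subset T <= S} -> {subset S <= Q} ->
  (forall q, q \in S -> (a q < q)%N) ->
  (forall q, q \in [seq q <- Q | q \notin S] -> (y q < q)%N) ->
  spec S a (ET Q T (Psi P Q f)) y =
  (\prod_(q <- Q | q \notin T) q)%:R / (size P)%:R *
  \sum_(p <- [seq x <- P | all (fun q => x %% q == a q)%N [seq q <- S | q \notin T]]
        | all (fun q => y q == p %% q)%N [seq q <- Q | q \notin S]) f p.
Proof.
move=> uQ Q_gt0 TS SQ a_lt y_lt.
have x_lt q : q \in Q -> ((if q \in S then a q else y q) < q)%N.
  by move=> qQ; case: ifP => qS; [apply: a_lt | apply: y_lt; rewrite mem_filter qS].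
rewrite /spec ET_Psi // => [|q /TS /SQ //].
by rewrite big_filter_cond; congr (_ * _); apply: eq_bigl => p; apply: all_spec_residues.
Qed.

End FourierOnGQ.

Section NormalisationEstimates.
Variable R : realType.

Lemma norm_ratio_sub1_le (M N L : nat) : (0 < L)%N ->
  (M * N <= L + M)%N -> (L <= M * N + M)%N ->
  `|(M * N)%:R / L%:R - 1| <= M%:R / L%:R :> R.
Proof.
move=> L_gt0 MN_le L_le; have LR_gt0 : (0 : R) < L%:R by rewrite ltr0n.
have -> : (M * N)%:R / L%:R - 1 = ((M * N)%:R - L%:R) / L%:R :> R.
  by field; rewrite lt0r_neq0.
rewrite normrM normfV (gtr0_norm LR_gt0).
apply: ler_wpM2r; first by rewrite invr_ge0 ltW.
rewrite ler_norml.
have c1 : ((M * N)%:R : R) <= L%:R + M%:R by rewrite -natrD ler_nat.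
have c2 : (L%:R : R) <= (M * N)%:R + M%:R by rewrite -natrD ler_nat.
by apply/andP; split; lra.
Qed.

Lemma normalisation_ratio (M N L C : nat) (s : R[i]) : (0 < L)%N -> (N = 0%N -> s = 0) ->
  (M * C)%:R / L%:R * s = (1 + ((M * N)%:R / L%:R - 1 : R)%:C) * (C%:R / N%:R * s).
Proof.
move=> L_gt0 s0; have [N0|N_neq0] := eqVneq N 0%N; first by rewrite s0 // !mulr0.
have -> : ((M * N)%:R / L%:R - 1 : R)%:C = (M * N)%:R / L%:R - 1.
  by rewrite rmorphB rmorph1 rmorphM fmorphV !rmorph_nat.
rewrite mulrA addrC subrK !natrM; congr (_ * _).
by field; rewrite !pnatr_eq0 N_neq0 -lt0n L_gt0.
Qed.

Lemma powR_5_4 (X : R) : 0 < X -> X `^ (5/4) = X `^ (1/4) * X.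
Proof.
move=> X_gt0; rewrite (_ : 5/4 = 1/4 + 1); last by lra.
by rewrite powRD ?powRr1 ?ltW // lt0r_neq0 // implybT.
Qed.

Lemma le_cofactor_powR_5_4 (X A B : R) : 0 < X -> 0 <= B ->
  A <= X `^ (1/4) -> X `^ (5/4) <= A * B -> X <= B.
Proof.
move=> X_gt0 B_ge0 A_le XAB; rewrite -(ler_pM2l (powR_gt0 (1/4) X_gt0)) -powR_5_4 //.
by apply: le_trans XAB _; apply: ler_wpM2r.
Qed.

Lemma powR_N1_2 (X : R) : 0 < X -> X `^ (-1/2) = X `^ (1/4) / X `^ (3/4).
Proof.
move=> X_gt0; rewrite -powRB; last by rewrite lt0r_neq0 // implybT.
by congr (_ `^ _); lra.
Qed.

Lemma ratio_sub1_le_powR (X : R) (M N L : nat) : 1 <= X ->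
  X `^ (3/4) <= L%:R -> M%:R <= X `^ (1/4) ->
  (M * N <= L + M)%N -> (L <= M * N + M)%N ->
  `|(M * N)%:R / L%:R - 1| <= X `^ (-1/2).
Proof.
move=> X_ge1 L_ge M_le MN_le L_le.
have X_gt0 : 0 < X by apply: lt_le_trans X_ge1.
have L_gt0 : 0 < L%:R :> R by apply: lt_le_trans L_ge; apply: powR_gt0.
have L_gt0N : (0 < L)%N by rewrite -(ltr0n R).
apply: le_trans (norm_ratio_sub1_le L_gt0N MN_le L_le) _.
rewrite powR_N1_2 // ler_pdivrMr // mulrAC ler_pdivlMr ?powR_gt0 //.
by apply: ler_pM; rewrite ?ler0n ?powR_ge0.
Qed.

End NormalisationEstimates.

Unset Implicit Arguments.

Theorem lemma3p2 (R : realType) (X : R) (b d L : nat) (Q S T : seq nat)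
  (a : nat -> nat) :
  1 <= X ->
  (* P = {b, b+d, ..., b+(L-1)d} subset of {1..X}, of length >= X^{3/4} *)
  (0 < d)%N ->
  in_range X (APseq b d L) ->
  X `^ (3/4) <= L%:R ->
  (* Q : pairwise coprime positive integers with product >= X^{5/4} *)
  uniq Q ->
  (forall q, q \in Q -> (0 < q)%N) ->
  (forall q q', q \in Q -> q' \in Q -> q != q' -> coprime q q') ->
  X `^ (5/4) <= (cardG Q)%:R ->
  (forall q, q \in Q -> coprime d q) ->
  (* S subset of Q with (max Q)^|S| <= X^{1/4}; T subset of S; a in G_S *)
  uniq S -> {subset S <= Q} ->
  (((\max_(q <- Q) q) ^ size S)%N)%:R <= X `^ (1/4) ->
  uniq T -> {subset T <= S} ->
  inG S a ->
  let P := APseq b d L in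
  let Q' := [seq q <- Q | q \notin S] in
  let P' := [seq x <- P | all (fun q => (x %% q)%N == a q) [seq q <- S | q \notin T]] in
  lift_ok X P' Q' /\
  exists eta : R, `|eta| <= X `^ (-1/2) /\
    forall (f : nat -> R[i]) (y : nat -> nat), inG Q' y ->
      spec S a (ET Q T (Psi P Q f)) y = (1 + eta%:C) * Psi P' Q' f y.
Proof.
move=> X_ge1 d_gt0 P_range L_ge uQ Q_gt0 copQ Q_ge copdQ uS SQ maxQ_le _ TS [a_lt _] P Q' P'.
have X_gt0 : 0 < X by apply: lt_le_trans X_ge1.
set ST := [seq q <- S | q \notin T]; set M := \prod_(q <- ST) q.
have STS : {subset ST <= S} by move=> q; rewrite mem_filter => /andP [].
have STQ : {subset ST <= Q} by move=> q /STS /SQ.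
have M_gt0 : (0 < M)%N by rewrite /M big_seq prodn_cond_gt0 // => q /STQ /Q_gt0.
have [b' [N [P'_AP [MN_le L_le]]]] := filter_APseq_residues b L d_gt0 (filter_uniq _ uS)
  (pairwise_coprime_sub STQ copQ) (fun q hq => copdQ q (STQ q hq)) (fun q hq => a_lt q (STS q hq)).
have cardS_le : (cardG S)%:R <= X `^ (1/4).
  apply: le_trans maxQ_le; rewrite ler_nat.
  by apply: prod_leq_expn => q /SQ qQ; apply: leq_bigmax_seq.
have M_le : M%:R <= X `^ (1/4).
  by apply: le_trans cardS_le; rewrite ler_nat /M big_filter prod_filter_leq // => q /SQ /Q_gt0.
split; first split.
- exists b', (d * M)%N, N; do 2!split => //; first by rewrite muln_gt0 d_gt0 M_gt0.
  move=> q; rewrite mem_filter => /andP [qS qQ]; rewrite coprimeMl copdQ //= coprime_sym.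
  by apply: coprime_prod_notin copQ STQ qQ _; apply: contra qS; apply: STS.
- split; first by move=> x; rewrite mem_filter => /andP [_ /P_range].
  apply: le_cofactor_powR_5_4 X_gt0 (ler0n _ _) cardS_le _.
  by rewrite -natrM /cardG big_filter -(prod_subset_split predT uQ uS SQ).
exists ((M * N)%:R / L%:R - 1); split; first exact: ratio_sub1_le_powR.
move=> f y [y_lt _]; rewrite spec_ET_Psi // /Psi (prod_notin_split uQ uS SQ TS) -/P' -/M.
have -> : size P = L by rewrite size_map size_iota.
have -> : size P' = N by rewrite /P' P'_AP size_map size_iota.
apply: normalisation_ratio => [|N0]; last by rewrite /P' P'_AP N0 big_nil.
by rewrite -(ltr0n R); apply: lt_le_trans L_ge; apply: powR_gt0.
Qed.
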